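(* Suppose Assumption 3 holds and $\alpha>0$ (which holds for almost all data). Let $\ell$ be the exponential loss $\ell(x)=e^{-x}$ or the logistic loss $\ell(x)=\ln(1+e^{-x})$, and let $K=\frac{1+\ln n}{\alpha}$ in the exponential case and $K=\frac{2n}{e\alpha}$ in the logistic case. Then for every $w\in\mathbb{R}^d$ with $\langle w,\bar u\rangle\ge0$ and $\|\Pi_\perp w\|> K$, we have $\langle\Pi_\perp w,\nabla\mathcal{R}(w)\rangle\ge0$.
   Context: Data $(x_i,y_i)_{i=1}^n$ with $x_i\in\mathbb{R}^d$, $\|x_i\|\le 1$, $y_i\in\{-1,+1\}$, $z_i:=y_ix_i$, linearly separable. $\gamma:=\max_{\|u\|=1}\min_i\langle u,z_i\rangle>0$ and $\bar u$ is the unique unit vector attaining it. $S$ is the set of indices $i$ with $\langle\bar u,z_i\rangle=\gamma$ (support vectors). Assumption 3: $\{z_i:i\in S\}$ spans $\mathbb{R}^d$. $\alpha:=\min_{\|\xi\|=1,\ \xi\perp\bar u}\max_{i\in S}\langle\xi,z_i\rangle$. For $w\in\mathbb{R}^d$, $\mathcal{R}(w):=\frac1n\sum_{i=1}^n\ell(\langle w,z_i\rangle)$, so $\nabla\mathcal{R}(w)=\frac1n\sum_i\ell'(\langle w,z_i\rangle)z_i$. $\Pi_\perp$ is the orthogonal projection onto the orthogonal complement of $\mathrm{span}(\bar u)$. *)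

(* classical reals. Vectors in R^d are functions nat -> R of
   which only the coordinates 0..d-1 matter. Data points are indexed 0..n-1. *)
From Stdlib Require Import Reals Lra.
Open Scope R_scope.

Definition vec := nat -> R.

Fixpoint sumR (m : nat) (f : nat -> R) : R :=
  match m with
  | O => 0
  | S m' => sumR m' f + f m'
  end.

Definition dot (d : nat) (u v : vec) : R := sumR d (fun k => u k * v k).
Definition norm (d : nat) (u : vec) : R := sqrt (dot d u u).

Definition zvec (x : nat -> vec) (y : nat -> R) : nat -> vec :=
  fun i k => y i * x i k.

(* ubar is a unit vector attaining gamma = max_{|u|=1} min_i <u, z_i> *)
Definition max_margin (d n : nat) (z : nat -> vec) (ubar : vec) (gamma : R) : Prop :=
  norm d ubar = 1 /\
  (forall i, (i < n)%nat -> gamma <= dot d ubar (z i)) /\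
  (exists i, (i < n)%nat /\ dot d ubar (z i) = gamma) /\
  (forall u : vec, norm d u = 1 -> exists i, (i < n)%nat /\ dot d u (z i) <= gamma).

Definition in_S (d : nat) (z : nat -> vec) (ubar : vec) (gamma : R) (i : nat) : Prop :=
  dot d ubar (z i) = gamma.

Definition assumption3 (d n : nat) (z : nat -> vec) (ubar : vec) (gamma : R) : Prop :=
  forall v : vec, exists c : nat -> R,
    (forall i, (i < n)%nat -> ~ in_S d z ubar gamma i -> c i = 0) /\
    (forall k, (k < d)%nat -> v k = sumR n (fun i => c i * z i k)).

(* alpha = min_{|xi|=1, xi ⊥ ubar} max_{i in S} <xi, z_i>  (the minimum is
   characterized as a lower bound that is attained) *)
Definition is_alpha (d n : nat) (z : nat -> vec) (ubar : vec) (gamma alpha : R) : Prop :=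
  (forall xi : vec, norm d xi = 1 -> dot d xi ubar = 0 ->
     exists i, (i < n)%nat /\ in_S d z ubar gamma i /\ alpha <= dot d xi (z i)) /\
  (exists xi : vec, norm d xi = 1 /\ dot d xi ubar = 0 /\
     forall i, (i < n)%nat -> in_S d z ubar gamma i -> dot d xi (z i) <= alpha).

Inductive loss_kind := ExpLoss | LogisticLoss.

Definition loss (L : loss_kind) (t : R) : R :=
  match L with
  | ExpLoss => exp (- t)
  | LogisticLoss => ln (1 + exp (- t))
  end.

Definition dloss (L : loss_kind) (t : R) : R :=
  match L with
  | ExpLoss => - exp (- t)
  | LogisticLoss => - (exp (- t) / (1 + exp (- t)))
  end.

Lemma dloss_correct (L : loss_kind) (t : R) :
  derivable_pt_lim (loss L) t (dloss L t).
Proof.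
  assert (He : derivable_pt_lim (fun s => exp (- s)) t (- exp (- t))).
  { replace (- exp (- t)) with (exp (- t) * (-1)) by ring.
    apply (derivable_pt_lim_comp (fun s => - s) exp).
    - replace (-1) with (- 1) by ring. apply derivable_pt_lim_opp, derivable_pt_lim_id.
    - apply derivable_pt_lim_exp. }
  destruct L; simpl.
  - exact He.
  - assert (Hp : 0 < 1 + exp (- t)) by (pose proof (exp_pos (- t)); lra).
    replace (- (exp (- t) / (1 + exp (- t)))) with ((/ (1 + exp (- t))) * (0 + - exp (- t)))
      by (field; lra).
    apply (derivable_pt_lim_comp (fun s => 1 + exp (- s)) ln).
    + apply derivable_pt_lim_plus; [apply derivable_pt_lim_const | exact He].
    + apply derivable_pt_lim_ln; exact Hp.
Qed.

Definition risk (d n : nat) (L : loss_kind) (z : nat -> vec) (w : vec) : R :=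
  / INR n * sumR n (fun i => loss L (dot d w (z i))).

Definition grad (d n : nat) (L : loss_kind) (z : nat -> vec) (w : vec) : vec :=
  fun k => / INR n * sumR n (fun i => dloss L (dot d w (z i)) * z i k).

Definition proj_perp (d : nat) (ubar w : vec) : vec :=
  fun k => w k - dot d w ubar * ubar k.

Definition Kthr (L : loss_kind) (n : nat) (alpha : R) : R :=
  match L with
  | ExpLoss => (1 + ln (INR n)) / alpha
  | LogisticLoss => 2 * INR n / (exp 1 * alpha)
  end.

(* Write v = Π⊥ w, r = |v| and c = <w, ū> γ >= 0.  The unit vector -v/r is orthogonal to ū,
   so by the definition of α some support vector z_i0 satisfies <v, z_i0> <= -α r, while
   <w, z_i> >= c + <v, z_i> for every i.  With g = -ℓ' we have g(s) <= e^(-s), so every term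
   g(<w, z_i>) <v, z_i> is at most e^(-c) sup_p p e^(-p) = e^(-c)/e; the term of i0 however is
   at most -α r g(c + <v, z_i0>), and once r > K it outweighs the n terms e^(-c)/e.  Hence
   <v, ∇R(w)> = -(1/n) Σ g(<w, z_i>) <v, z_i> >= 0. *)
From Stdlib Require Import Reals Lra Lia.
Open Scope R_scope.

Lemma sumR_ext m f g : (forall k, (k < m)%nat -> f k = g k) -> sumR m f = sumR m g.
Proof.
  induction m as [|m IH]; intros Hfg; simpl; [reflexivity|].
  rewrite IH by (intros; apply Hfg; lia). rewrite Hfg by lia. reflexivity.
Qed.

Lemma sumR_plus m f g : sumR m (fun k => f k + g k) = sumR m f + sumR m g.
Proof. induction m as [|m IH]; simpl; [ring|]. rewrite IH; ring. Qed.

Lemma sumR_scal m c f : sumR m (fun k => c * f k) = c * sumR m f.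
Proof. induction m as [|m IH]; simpl; [ring|]. rewrite IH; ring. Qed.

Lemma sumR_zero m : sumR m (fun _ => 0) = 0.
Proof. induction m as [|m IH]; simpl; [ring|]. rewrite IH; ring. Qed.

Lemma sumR_swap m p (f : nat -> nat -> R) :
  sumR m (fun k => sumR p (fun i => f k i)) = sumR p (fun i => sumR m (fun k => f k i)).
Proof.
  induction m as [|m IH]; simpl.
  - symmetry; apply sumR_zero.
  - rewrite IH, <- sumR_plus. reflexivity.
Qed.

Lemma sumR_nonneg m f : (forall k, (k < m)%nat -> 0 <= f k) -> 0 <= sumR m f.
Proof.
  induction m as [|m IH]; intros Hf; simpl; [lra|].
  assert (0 <= f m) by (apply Hf; lia).
  assert (0 <= sumR m f) by (apply IH; intros; apply Hf; lia).
  lra.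
Qed.

Lemma sumR_le_const m f B : (forall k, (k < m)%nat -> f k <= B) -> sumR m f <= INR m * B.
Proof.
  induction m as [|m IH]; intros Hf; simpl sumR; [simpl; lra|].
  rewrite S_INR.
  assert (f m <= B) by (apply Hf; lia).
  assert (sumR m f <= INR m * B) by (apply IH; intros; apply Hf; lia).
  lra.
Qed.

Lemma sumR_le_const_plus m f B i0 :
  0 <= B -> (i0 < m)%nat -> (forall k, (k < m)%nat -> f k <= B) ->
  sumR m f <= INR m * B + f i0.
Proof.
  induction m as [|m IH]; intros HB Hi0 Hf; [lia|].
  simpl sumR; rewrite S_INR.
  destruct (Nat.eq_dec i0 m) as [->|Hne].
  - assert (sumR m f <= INR m * B) by (apply sumR_le_const; intros; apply Hf; lia).
    lra.
  - assert (sumR m f <= INR m * B + f i0) by (apply IH; [lra|lia|intros; apply Hf; lia]).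
    assert (f m <= B) by (apply Hf; lia).
    lra.
Qed.

Lemma dot_comm d u v : dot d u v = dot d v u.
Proof. unfold dot. apply sumR_ext; intros; ring. Qed.

Lemma dot_self_nonneg d u : 0 <= dot d u u.
Proof. unfold dot. apply sumR_nonneg; intros; nra. Qed.

Lemma dot_scal_l d c u v : dot d (fun k => c * u k) v = c * dot d u v.
Proof. unfold dot. rewrite <- sumR_scal. apply sumR_ext; intros; ring. Qed.

Lemma dot_self_norm d u : dot d u u = norm d u * norm d u.
Proof. unfold norm. rewrite sqrt_sqrt; [reflexivity | apply dot_self_nonneg]. Qed.

Lemma dot_proj_perp d ub w u :
  dot d (proj_perp d ub w) u = dot d w u - dot d w ub * dot d ub u.
Proof.
  unfold dot at 1, proj_perp.
  rewrite (sumR_ext d _ (fun k => w k * u k + (- dot d w ub) * (ub k * u k))) by (intros; ring).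
  rewrite sumR_plus, sumR_scal. unfold dot. ring.
Qed.

Lemma proj_perp_orthogonal d ub w :
  norm d ub = 1 -> dot d (proj_perp d ub w) ub = 0.
Proof.
  intros Hub. rewrite dot_proj_perp, dot_self_norm, Hub. ring.
Qed.

Lemma is_alpha_support_against d n z ub gamma alpha v :
  is_alpha d n z ub gamma alpha -> 0 < norm d v -> dot d v ub = 0 ->
  exists i0, (i0 < n)%nat /\ in_S d z ub gamma i0 /\ dot d v (z i0) <= - (alpha * norm d v).
Proof.
  intros [Halpha _] Hr Hvub.
  set (r := norm d v) in *.
  set (xi := fun k => (- / r) * v k).
  assert (Hxi_unit : norm d xi = 1).
  { unfold norm, xi. rewrite dot_scal_l, dot_comm, dot_scal_l, dot_self_norm. fold r.
    replace (- / r * (- / r * (r * r))) with 1 by (field; lra). apply sqrt_1. }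
  assert (Hxi_perp : dot d xi ub = 0) by (unfold xi; rewrite dot_scal_l, Hvub; ring).
  destruct (Halpha xi Hxi_unit Hxi_perp) as [i0 [Hi0 [HS Hle]]].
  exists i0; split; [exact Hi0 | split; [exact HS |]].
  unfold xi in Hle; rewrite dot_scal_l in Hle.
  apply (Rmult_le_compat_r r) in Hle; [|lra].
  replace (- / r * dot d v (z i0) * r) with (- dot d v (z i0)) in Hle by (field; lra).
  lra.
Qed.

Lemma exp_le_compat a b : a <= b -> exp a <= exp b.
Proof. intros [Hab|Hab]; [left; apply exp_increasing; exact Hab | rewrite Hab; lra]. Qed.

Lemma ln_ge_0 x : 1 <= x -> 0 <= ln x.
Proof.
  intros [Hx|Hx]; [|rewrite <- Hx, ln_1; lra].
  rewrite <- ln_1. left; apply ln_increasing; lra.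
Qed.

Lemma mul_exp_neg_le_inv_e p : p * exp (- p) <= / exp 1.
Proof.
  pose proof (exp_ineq1_le (p - 1)) as Hp.
  pose proof (exp_pos (p - 1)). pose proof (exp_pos 1).
  replace (exp (- p)) with (/ exp 1 * / exp (p - 1))
    by (rewrite <- Rinv_mult, <- exp_plus, <- exp_Ropp; f_equal; f_equal; ring).
  assert (p * / exp (p - 1) <= 1).
  { apply (Rmult_le_reg_r (exp (p - 1))); [lra|].
    rewrite Rmult_assoc, Rinv_l by lra. lra. }
  assert (0 < / exp 1) by (apply Rinv_0_lt_compat; lra).
  nra.
Qed.

Lemma mul_exp_neg_le_of_le p m : 0 <= m -> p <= - m -> p * exp (- p) <= - m * exp m.
Proof.
  intros Hm Hp.
  assert (exp m <= exp (- p)) by (apply exp_le_compat; lra).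
  pose proof (exp_pos m).
  nra.
Qed.

Definition loss_weight (L : loss_kind) (s : R) : R := - dloss L s.

Lemma dot_grad_eq_weighted d n L z v w :
  dot d v (grad d n L z w)
  = - / INR n * sumR n (fun i => loss_weight L (dot d w (z i)) * dot d v (z i)).
Proof.
  unfold dot at 1, grad.
  rewrite (sumR_ext d _
    (fun k => / INR n * sumR n (fun i => dloss L (dot d w (z i)) * (v k * z i k)))).
  2:{ intros k _. rewrite Rmult_comm, Rmult_assoc, (Rmult_comm _ (v k)), <- sumR_scal.
      f_equal. apply sumR_ext; intros; ring. }
  rewrite sumR_scal, sumR_swap.
  replace (- / INR n) with (/ INR n * (-1)) by ring.
  rewrite Rmult_assoc, <- (sumR_scal n (-1)). f_equal.
  apply sumR_ext; intros i _. rewrite sumR_scal. unfold loss_weight, dot. ring.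
Qed.

Lemma loss_weight_pos L s : 0 < loss_weight L s.
Proof.
  pose proof (exp_pos (- s)).
  unfold loss_weight, dloss; destruct L; [lra|].
  rewrite Ropp_involutive. apply Rdiv_lt_0_compat; lra.
Qed.

Lemma loss_weight_le_exp L s : loss_weight L s <= exp (- s).
Proof.
  pose proof (exp_pos (- s)).
  unfold loss_weight, dloss; destruct L; [lra|].
  rewrite Ropp_involutive. unfold Rdiv.
  assert (/ (1 + exp (- s)) <= 1) by (rewrite <- Rinv_1; apply Rinv_le_contravar; lra).
  nra.
Qed.

Lemma logistic_weight_ge c p :
  0 <= c -> p <= 0 -> exp (- c) / 2 <= loss_weight LogisticLoss (c + p).
Proof.
  intros Hc Hp.
  unfold loss_weight, dloss. rewrite Ropp_involutive.
  replace (exp (- (c + p))) with (exp (- c) * exp (- p))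
    by (rewrite <- exp_plus; f_equal; ring).
  assert (HX : exp (- c) <= 1) by (rewrite <- exp_0; apply exp_le_compat; lra).
  assert (HY : 1 <= exp (- p)) by (rewrite <- exp_0; apply exp_le_compat; lra).
  pose proof (exp_pos (- c)).
  set (X := exp (- c)) in *; set (Y := exp (- p)) in *.
  apply (Rmult_le_reg_r (2 * (1 + X * Y))); [nra|].
  replace (X * Y / (1 + X * Y) * (2 * (1 + X * Y))) with (2 * X * Y) by (field; nra).
  replace (X / 2 * (2 * (1 + X * Y))) with (X * (1 + X * Y)) by field.
  assert (X * Y <= Y) by nra.
  assert (X * (1 + X * Y) <= X * (2 * Y)) by (apply Rmult_le_compat_l; lra).
  lra.
Qed.

Lemma weight_mul_le_exp_inv_e L c p s :
  0 <= c -> c + p <= s -> loss_weight L s * p <= exp (- c) / exp 1.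
Proof.
  intros Hc Hs.
  pose proof (loss_weight_pos L s). pose proof (loss_weight_le_exp L s).
  pose proof (exp_pos (- c)). pose proof (exp_pos (- p)). pose proof (exp_pos 1).
  assert (0 < exp (- c) / exp 1) by (apply Rdiv_lt_0_compat; lra).
  destruct (Rle_dec p 0); [nra|].
  assert (exp (- s) <= exp (- c) * exp (- p)) by (rewrite <- exp_plus; apply exp_le_compat; lra).
  pose proof (mul_exp_neg_le_inv_e p).
  unfold Rdiv.
  apply Rle_trans with (exp (- c) * (p * exp (- p))); [nra|].
  apply Rmult_le_compat_l; lra.
Qed.

Lemma exp_support_term_dominates n c p m :
  (1 <= n)%nat -> 1 + ln (INR n) < m -> p <= - m ->
  INR n * (exp (- c) / exp 1) + loss_weight ExpLoss (c + p) * p <= 0.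
Proof.
  intros Hn Hm Hp.
  assert (HnR : 1 <= INR n) by (apply (le_INR 1); exact Hn).
  pose proof (ln_ge_0 _ HnR).
  assert (Hgrowth : exp 1 * INR n < exp m).
  { rewrite <- (exp_ln (INR n)) at 1 by lra. rewrite <- exp_plus.
    apply exp_increasing; lra. }
  assert (Hpe : p * exp (- p) <= - m * exp m) by (apply mul_exp_neg_le_of_le; lra).
  unfold loss_weight, dloss. rewrite Ropp_involutive.
  replace (exp (- (c + p)) * p) with (exp (- c) * (p * exp (- p)))
    by (replace (- (c + p)) with (- c + - p) by ring; rewrite exp_plus; ring).
  pose proof (exp_ineq1_le 1). pose proof (exp_pos (- c)). pose proof (exp_pos m).
  assert (INR n / exp 1 <= m * exp m).
  { apply (Rmult_le_reg_r (exp 1)); [lra|].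
    replace (INR n / exp 1 * exp 1) with (INR n) by (field; lra).
    assert (exp m <= m * exp m) by nra.
    assert (m * exp m <= m * exp m * exp 1) by nra.
    nra. }
  unfold Rdiv in *.
  nra.
Qed.

Lemma logistic_support_term_dominates n c p m :
  0 <= c -> 2 * INR n / exp 1 < m -> p <= - m ->
  INR n * (exp (- c) / exp 1) + loss_weight LogisticLoss (c + p) * p <= 0.
Proof.
  intros Hc Hm Hp.
  pose proof (exp_pos (- c)). pose proof (exp_pos 1).
  assert (Hn0 : 0 <= INR n) by apply pos_INR.
  assert (0 <= 2 * INR n / exp 1)
    by (unfold Rdiv; apply Rmult_le_pos; [lra | left; apply Rinv_0_lt_compat; lra]).
  pose proof (logistic_weight_ge c p Hc ltac:(lra)).
  assert (loss_weight LogisticLoss (c + p) * p <= - m * (exp (- c) / 2)) by nra.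
  assert (INR n * (exp (- c) / exp 1) <= m * (exp (- c) / 2)).
  { replace (INR n * (exp (- c) / exp 1)) with (2 * INR n / exp 1 * (exp (- c) / 2))
      by (field; lra).
    apply Rmult_le_compat_r; lra. }
  lra.
Qed.

Lemma Kthr_nonneg L n alpha : (1 <= n)%nat -> 0 < alpha -> 0 <= Kthr L n alpha.
Proof.
  intros Hn Halpha.
  assert (HnR : 1 <= INR n) by (apply (le_INR 1); exact Hn).
  pose proof (ln_ge_0 _ HnR). pose proof (exp_pos 1).
  destruct L; unfold Kthr, Rdiv; apply Rmult_le_pos;
    [lra | left; apply Rinv_0_lt_compat; lra | lra |].
  left; apply Rinv_0_lt_compat, Rmult_lt_0_compat; lra.
Qed.

Lemma support_term_dominates L n alpha r c p :
  (1 <= n)%nat -> 0 < alpha -> 0 <= c -> Kthr L n alpha < r -> p <= - (alpha * r) ->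
  INR n * (exp (- c) / exp 1) + loss_weight L (c + p) * p <= 0.
Proof.
  intros Hn Halpha Hc HK Hp.
  apply (Rmult_lt_compat_l alpha) in HK; [|exact Halpha].
  pose proof (exp_pos 1).
  destruct L; unfold Kthr in HK.
  - apply (exp_support_term_dominates n c p (alpha * r)); [exact Hn | | exact Hp].
    replace (alpha * ((1 + ln (INR n)) / alpha)) with (1 + ln (INR n)) in HK
      by (field; lra). exact HK.
  - apply (logistic_support_term_dominates n c p (alpha * r)); [exact Hc | | exact Hp].
    replace (alpha * (2 * INR n / (exp 1 * alpha))) with (2 * INR n / exp 1) in HK
      by (field; lra). exact HK.
Qed.

Lemma weighted_sum_nonpos L n alpha r c (s p : nat -> R) i0 :
  0 < alpha -> 0 <= c -> Kthr L n alpha < r ->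
  (forall i, (i < n)%nat -> c + p i <= s i) ->
  (i0 < n)%nat -> s i0 = c + p i0 -> p i0 <= - (alpha * r) ->
  sumR n (fun i => loss_weight L (s i) * p i) <= 0.
Proof.
  intros Halpha Hc HK Hs Hi0 Hs0 Hp0.
  pose proof (exp_pos (- c)). pose proof (exp_pos 1).
  assert (HB : 0 <= exp (- c) / exp 1) by (apply Rlt_le, Rdiv_lt_0_compat; lra).
  eapply Rle_trans.
  - apply (sumR_le_const_plus n _ (exp (- c) / exp 1) i0 HB Hi0).
    intros k Hk. apply (weight_mul_le_exp_inv_e L c (p k)); [exact Hc | apply Hs, Hk].
  - simpl. rewrite Hs0. apply (support_term_dominates L n alpha r); [lia | assumption..].
Qed.

Theorem mainTheorem7 :
  forall (d n : nat) (x : nat -> vec) (y : nat -> R) (ubar : vec) (gamma alpha : R)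
         (L : loss_kind) (w : vec),
    (forall i, (i < n)%nat -> norm d (x i) <= 1) ->
    (forall i, (i < n)%nat -> y i = 1 \/ y i = -1) ->
    0 < gamma ->
    max_margin d n (zvec x y) ubar gamma ->
    assumption3 d n (zvec x y) ubar gamma ->
    is_alpha d n (zvec x y) ubar gamma alpha ->
    0 < alpha ->
    0 <= dot d w ubar ->
    Kthr L n alpha < norm d (proj_perp d ubar w) ->
    0 <= dot d (proj_perp d ubar w) (grad d n L (zvec x y) w).
Proof.
  (* Only the margin inequalities and the defining property of α are needed. *)
  intros d n x y ub gamma alpha L w _ _ Hgamma [Hub [Hmargin _]] _ Hdef_alpha Halpha Hwu HK.
  set (z := zvec x y) in *. set (v := proj_perp d ub w) in *.
  rewrite dot_grad_eq_weighted.
  destruct n as [|n']; [simpl; lra|].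
  assert (Hr : 0 < norm d v) by (pose proof (Kthr_nonneg L (S n') alpha ltac:(lia) Halpha); lra).
  destruct (is_alpha_support_against d (S n') z ub gamma alpha v Hdef_alpha Hr
              (proj_perp_orthogonal d ub w Hub)) as [i0 [Hi0 [HS Hp0]]].
  assert (Hsplit : forall j, dot d w (z j) = dot d w ub * dot d ub (z j) + dot d v (z j))
    by (intros j; unfold v; rewrite dot_proj_perp; ring).
  assert (Hsum : sumR (S n') (fun i => loss_weight L (dot d w (z i)) * dot d v (z i)) <= 0).
  { apply (weighted_sum_nonpos L (S n') alpha (norm d v) (dot d w ub * gamma)
             (fun i => dot d w (z i)) (fun i => dot d v (z i)) i0); try assumption.
    - apply Rmult_le_pos; lra.
    - intros i Hi. rewrite Hsplit. pose proof (Hmargin i Hi). nra.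
    - rewrite Hsplit. unfold in_S in HS. rewrite HS. ring. }
  assert (0 < / INR (S n')) by (apply Rinv_0_lt_compat, lt_0_INR; lia).
  nra.
Qed.
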